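(* The hyperplane $S_\gamma^\perp$ of $\Sigma$ meets $\Pi$ in a solid $\Pi\cap S_\gamma^\perp$ such that $\Pi\cap S_\gamma^\perp\cap\mathcal Q$ is an elliptic quadric of that solid. Moreover the stabilizer of $S_\gamma$ in $G$ has order $q^2+1$, and $|S_\gamma^G|=q^2(q^2-1)$.
   Context: Let $q$ be an even prime power and $\mathrm{PG}(5,q^2)$ have homogeneous coordinates $(X_1,\dots,X_6)$, points written as column vectors. Let $\Sigma$ be the set of points having a coordinate vector $(\alpha,\alpha^q,\delta_0,\beta,\beta^q,\delta_1)$ with $\alpha,\beta\in\mathbb F_{q^2}$, $\delta_0,\delta_1\in\mathbb F_q$ (a Baer subgeometry $\cong\mathrm{PG}(5,q)$). Let $\Pi=\Sigma\cap\{X_6=0\}$ (a hyperplane of $\Sigma$), $\mathcal Q=\Sigma\cap\{X_6=0,\ X_3^2+X_1X_5+X_2X_4=0\}=\{(\alpha,\alpha^q,\sqrt{\alpha\beta^q+\alpha^q\beta},\beta,\beta^q,0)\}$ (a parabolic quadric $\mathcal Q(4,q)$ of $\Pi$) with nucleus $N=(0,0,1,0,0,0)$. Fix $\omega\in\mathbb F_{q^2}\setminus\mathbb F_q$ with $\omega+\omega^q=1$ and let $h(X,Y)=\omega X_1Y_4^q+\omega^qX_1Y_6^q+\omega^qX_2Y_5^q+\omega X_2Y_6^q+X_3Y_6^q+\omega^qX_4Y_1^q+\omega X_5Y_2^q+\omega X_6Y_1^q+\omega^qX_6Y_2^q+X_6Y_3^q$ (Hermitian form of a Hermitian variety $\mathcal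 H(5,q^2)$ containing $\Sigma$). Restricted to $\Sigma$, $P\perp R\iff h(P,R)=0$ defines a symplectic polarity $\perp$ of $\Sigma$; $\mathcal W(5,q)$ is the associated symplectic polar space (so $N^\perp=\Pi$). For $a,b,c,d\in\mathbb F_{q^2}$ with $ad+bc=1$ let $M_{a,b,c,d}$ be the $6\times6$ matrix with rows $(a^2,0,0,0,c^2,\tfrac{c(a+c\omega^q)}{\omega})$, $(0,a^{2q},0,c^{2q},0,\tfrac{c^q(a^q+c^q\omega)}{\omega^q})$, $(ab,a^qb^q,1,c^qd^q,cd,\tfrac{d(a+c\omega^q)}{\omega}+\tfrac{d^q(a^q+c^q\omega)}{\omega^q}+\tfrac{1}{\omega^{q+1}})$, $(0,b^{2q},0,d^{2q},0,\tfrac{d^q(b^q+d^q\omega)+\omega}{\omega^q})$, $(b^2,0,0,0,d^2,\tfrac{d(b+d\omega^q)+\omega^q}{\omega})$, $(0,0,0,0,0,1)$, and let $G\cong\mathrm{PSL}(2,q^2)$ be the group of projectivities $X\mapsto M_{a,b,c,d}X$; $G$ stabilizes $\Sigma,\Pi,\mathcal Q,N$ and the polarity $\perp$. Fix $\gamma\in\mathbb F_{q^2}$ with $X^2+X+\gamma$ irreducible over $\mathbb F_{q^2}$ and let $S_\gamma=\left(\frac{\gamma}{\omega},\frac{\gamma^q}{\omega^q},\frac{\omega^q\gamma}{\omega}+\frac{\omega\gamma^q}{\omega^q},1,1,1\right)\in\Sigma$; $S_\gamma^G$ is its $G$-orbit. *)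

From HB Require Import structures.
From mathcomp Require Import all_boot all_order all_algebra all_field.
Set Implicit Arguments. Unset Strict Implicit. Unset Printing Implicit Defensive.
Import Order.TTheory GRing.Theory Num.Theory.
Local Open Scope ring_scope.

Section Defs.
Variable F : finFieldType.
Variable q : nat.      (* F = F_{q^2}, conjugation x |-> x^q *)
Variable w : F.

Definition inFq (x : F) : bool := x ^+ q == x.

(* 1-based coordinate X_i of a column vector *)
Definition crd (v : 'cV[F]_6) (i : nat) : F := v (@inord 5 i.-1) ord0.

Definition hform (X Y : 'cV[F]_6) : F :=
  let c x := x ^+ q in
  w * crd X 1 * c (crd Y 4) + c w * crd X 1 * c (crd Y 6)
  + c w * crd X 2 * c (crd Y 5) + w * crd X 2 * c (crd Y 6)
  + crd X 3 * c (crd Y 6) + c w * crd X 4 * c (crd Y 1)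
  + w * crd X 5 * c (crd Y 2) + w * crd X 6 * c (crd Y 1)
  + c w * crd X 6 * c (crd Y 2) + crd X 6 * c (crd Y 3).

Definition inV (v : 'cV[F]_6) : bool :=
  [&& crd v 2 == crd v 1 ^+ q, crd v 5 == crd v 4 ^+ q,
      inFq (crd v 3) & inFq (crd v 6)].

(* the point <v> of PG(5,q^2) belongs to the Baer subgeometry Sigma *)
Definition inSigma (v : 'cV[F]_6) : Prop :=
  v != 0 /\ exists k : F, k != 0 /\ inV (k *: v).

Definition inPi (v : 'cV[F]_6) : Prop := inSigma v /\ crd v 6 = 0.

Definition inQ (v : 'cV[F]_6) : Prop :=
  inPi v /\ crd v 3 ^+ 2 + crd v 1 * crd v 5 + crd v 2 * crd v 4 = 0.

Definition inPerp (P v : 'cV[F]_6) : Prop := inSigma v /\ hform P v = 0.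

(* entries of the matrix M_{a,b,c,d} (0-based row i, column j) *)
Definition Mentry (a b c d : F) (i j : nat) : F :=
  let cj x := x ^+ q in
  match i, j with
  | 0, 0 => a ^+ 2
  | 0, 4 => c ^+ 2
  | 0, 5 => c * (a + c * cj w) / w
  | 1, 1 => cj a ^+ 2
  | 1, 3 => cj c ^+ 2
  | 1, 5 => cj c * (cj a + cj c * w) / cj w
  | 2, 0 => a * b
  | 2, 1 => cj a * cj b
  | 2, 2 => 1
  | 2, 3 => cj c * cj d
  | 2, 4 => c * d
  | 2, 5 => d * (a + c * cj w) / w + cj d * (cj a + cj c * w) / cj w
            + 1 / (w ^+ q.+1)
  | 3, 1 => cj b ^+ 2
  | 3, 3 => cj d ^+ 2
  | 3, 5 => (cj d * (cj b + cj d * w) + w) / cj w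
  | 4, 0 => b ^+ 2
  | 4, 4 => d ^+ 2
  | 4, 5 => (d * (b + d * cj w) + cj w) / w
  | 5, 5 => 1
  | _, _ => 0
  end.

Definition Mabcd (a b c d : F) : 'M[F]_6 :=
  \matrix_(i < 6, j < 6) Mentry a b c d i j.

(* the group G ~ PSL(2,q^2) as a set of matrices; since every M_{a,b,c,d}
   has last row (0,...,0,1), distinct matrices give distinct projectivities *)
Definition Gset : {set 'M[F]_6} :=
  [set g | [exists a : F, exists b : F, exists c : F, exists d : F,
            (a * d + b * c == 1) && (g == Mabcd a b c d)]].

(* canonical representation of the projective point <v> : its row space *)
Definition ppt (v : 'cV[F]_6) : 'M[F]_6 := (<< v^T >>)%MS.

Definition Sgamma (g : F) : 'cV[F]_6 :=
  \col_(i < 6) (match val i with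
                | 0 => g / w
                | 1 => g ^+ q / w ^+ q
                | 2 => w ^+ q * g / w + w * g ^+ q / w ^+ q
                | _ => 1 end).

(* Elliptic quadric of a solid of Sigma, in canonical form:
   the solid is the set of points <U lam>, lam in F_q^4 \ 0, where the
   columns of U lie in the F_q-form V of Sigma and are F_q-independent;
   in these coordinates the point set is V(X0 X1 + a X2^2 + b X2 X3 + c X3^2)
   with a X^2 + b XY + c Y^2 irreducible (anisotropic) over F_q. *)
Definition FqVec (lam : 'cV[F]_4) : bool := [forall i, inFq (lam i ord0)].

Definition solid_basis (U : 'M[F]_(6,4)) : Prop :=
  (forall j, inV (col j U)) /\
  (forall lam : 'cV[F]_4, FqVec lam -> U *m lam = 0 -> lam = 0).

Definition is_solid_of_Sigma (A : 'cV[F]_6 -> Prop) (U : 'M[F]_(6,4)) : Prop :=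
  solid_basis U /\
  forall v : 'cV[F]_6,
    A v <-> exists lam : 'cV[F]_4,
      [/\ FqVec lam, lam != 0 & exists k : F, k != 0 /\ v = k *: (U *m lam)].

Definition is_elliptic_quadric_in (U : 'M[F]_(6,4)) (B : 'cV[F]_6 -> Prop)
  : Prop :=
  exists a b c : F,
    [/\ inFq a, inFq b, inFq c,
        (forall x y : F, inFq x -> inFq y -> (x != 0) || (y != 0) ->
            a * x ^+ 2 + b * x * y + c * y ^+ 2 != 0) &
        forall lam : 'cV[F]_4, FqVec lam -> lam != 0 ->
          (B (U *m lam) <->
           lam 0 0 * lam 1 0 + a * lam 2 0 ^+ 2 + b * lam 2 0 * lam 3 0
           + c * lam 3 0 ^+ 2 = 0)].

End Defs.

From HB Require Import structures.
From mathcomp Require Import all_boot all_order all_algebra all_field.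
From mathcomp Require Import ring.
Import Order.TTheory GRing.Theory Num.Theory.
Local Open Scope ring_scope.
Set Implicit Arguments. Unset Strict Implicit. Unset Printing Implicit Defensive.

(* Let th, th' be the roots of X^2 + X + gamma and Qf x y = gamma x^2 + x y + y^2
   the norm of x th + y.  Since every M_{a,b,c,d} fixes X6, the point
   M_{a,b,c,d} S_gamma is determined by Qf a c, Qf b d and the trace of e / w,
   where (a th + c)(b th' + d) = e + th.  Multiplicativity of the norm gives
   Qf a c * Qf b d = e^2 + e + gamma; hence the stabilizer consists of the
   M_{b+d,b,b gamma,d} with Qf b d = 1, which number q^2 + 1, and the orbit is
   parametrized injectively by the pairs (s, e) with s <> 0.
   The solid Pi /\ S_gamma^perp is spanned over F_q by four explicit points, in
   whose coordinates the quadric reads l0 l1 + l2^2 + l2 l3 + (trace gamma)^2 l3^2;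
   its binary part is anisotropic over F_q, because a zero would produce, via
   an Artin-Schreier root in F_{q^2}, a root of X^2 + X + gamma. *)

Section Frobenius.
Variables (F : finFieldType) (q : nat).
Hypotheses (qnat : [pchar F].-nat q) (cardF : #|F| = (q ^ 2)%N).

Local Notation cj x := (x ^+ q).

Lemma q_gt0 : (0 < q)%N.
Proof. by case/andP: qnat. Qed.

Lemma conjD (x y : F) : cj (x + y) = cj x + cj y.
Proof. exact: exprDn_pchar. Qed.

Lemma conjM (x y : F) : cj (x * y) = cj x * cj y.
Proof. exact: exprMn. Qed.

Lemma conjV (x : F) : cj x^-1 = (cj x)^-1.
Proof. exact: exprVn. Qed.

Lemma conjX (x : F) n : cj (x ^+ n) = cj x ^+ n.
Proof. by rewrite -!exprM mulnC. Qed.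

Lemma conj0 : cj (0 : F) = 0.
Proof. by rewrite expr0n eqn0Ngt q_gt0. Qed.

Lemma conj1 : cj (1 : F) = 1.
Proof. exact: expr1n. Qed.

Lemma conjK (x : F) : cj (cj x) = x.
Proof. by rewrite -exprM mulnn -cardF expf_card. Qed.

Lemma conj_eq0 (x : F) : (cj x == 0) = (x == 0).
Proof. by rewrite expf_eq0 q_gt0. Qed.

Definition conjE := (conjD, conjM, conjV, conjX, conjK, conj0, conj1).

End Frobenius.

Section Char2.
Variable F : fieldType.
Hypothesis chF2 : 2%N \in [pchar F].

Lemma two_eq0 : 2%:R = 0 :> F.
Proof. exact: pcharf0 chF2. Qed.

Lemma eqr_pchar2 (x y z : F) : x = y + 2%:R * z -> x = y.
Proof. by rewrite two_eq0 mul0r addr0. Qed.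

Lemma AS_add (x y : F) : (x + y) ^+ 2 + (x + y) = (x ^+ 2 + x) + (y ^+ 2 + y).
Proof. by apply: (eqr_pchar2 (z := x * y)); ring. Qed.

Lemma sqr_inj : injective (fun x : F => x ^+ 2).
Proof.
by move=> x y /=; rewrite -!(pFrobenius_autE chF2); apply: fmorph_inj.
Qed.

Lemma AS_eq (x y : F) : x ^+ 2 + x = y ^+ 2 + y -> y = x \/ y = x + 1.
Proof.
move=> Exy; have : (y + x) * (y + (x + 1)) = 0.
  apply: (eqr_pchar2 (z := x ^+ 2 + x * y + x)).
  by rewrite -(subrr (x ^+ 2 + x)) {1}Exy; ring.
move/eqP; rewrite mulf_eq0 !addr_eq0 !(oppr_pchar2 chF2).
by case/orP => /eqP ->; [left | right].
Qed.

Lemma AS_eq0 (x : F) : x ^+ 2 + x = 0 -> x = 0 \/ x = 1.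
Proof.
move=> E; have /AS_eq : 0 ^+ 2 + 0 = x ^+ 2 + x by rewrite E expr0n addr0.
by rewrite add0r.
Qed.

End Char2.

Lemma leq_card_fiber2 (T rT : finType) (f : T -> rT) (t : T -> T)
    (A : {set T}) :
  {in A &, forall x y, f x = f y -> y = x \/ y = t x} ->
  (#|A| <= 2 * #|f @: A|)%N.
Proof.
move=> fib; pose P := preim_partition f A.
rewrite (card_partition (preim_partitionP f A)).
apply: (@leq_trans (\sum_(B in P) 2)); last first.
  rewrite sum_nat_const mulnC leq_mul2l /= /P /preim_partition /equivalence_partition.
  have -> : [set [set y in A | f x == f y] | x in A]
          = (fun z => [set y in A | z == f y]) @: (f @: A).
    by rewrite -imset_comp.
  exact: leq_imset_card.
apply: leq_sum => B /imsetP [x xA ->].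
apply: (@leq_trans #|[set x; t x]|); last by rewrite cards2; case: (_ != _).
apply/subset_leq_card/subsetP => y; rewrite !inE => /andP [yA /eqP fxy].
by case: (fib x y xA yA fxy) => ->; rewrite eqxx ?orbT.
Qed.

(** * The norm form of X^2 + X + g *)

Section NormForm.
Variables (F : fieldType) (g : F).
Hypothesis chF2 : 2%N \in [pchar F].
Hypothesis g_irr : forall x : F, x ^+ 2 + x + g != 0.

Definition Qf (x y : F) := g * x ^+ 2 + x * y + y ^+ 2.

(* For the roots th, th' of X^2 + X + g, Qf x y is the norm of x th + y, and
   (a th + c)(b th' + d) = Qcross a b c d + (a d + b c) th. *)
Definition Qcross (a b c d : F) := a * b * g + b * c + c * d.

Lemma Qf_neq0 (x y : F) : (x != 0) || (y != 0) -> Qf x y != 0.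
Proof.
have [-> /= y0 | x0 _] := eqVneq x 0.
  by rewrite /Qf expr0n /= mulr0 mul0r !add0r expf_neq0.
have -> : Qf x y = x ^+ 2 * ((y / x) ^+ 2 + y / x + g) by rewrite /Qf; field.
by rewrite mulf_neq0 ?expf_neq0.
Qed.

Lemma Qf_mul (a b c d : F) : a * d + b * c = 1 ->
  Qf a c * Qf b d = Qcross a b c d ^+ 2 + Qcross a b c d + g.
Proof.
move=> det1.
have -> : Qf a c * Qf b d = Qcross a b c d ^+ 2
    + Qcross a b c d * (a * d - b * c) + g * (a * d - b * c) ^+ 2.
  by rewrite /Qf /Qcross; ring.
by rewrite (oppr_pchar2 chF2) det1 mulr1 expr1n mulr1.
Qed.

End NormForm.

Lemma card_Qf_eq1 (F : finFieldType) (g : F) :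
    2%N \in [pchar F] -> (forall x : F, x ^+ 2 + x + g != 0) ->
  #|[set x : F * F | Qf g x.1 x.2 == 1]| = #|F|.+1.
Proof.
move=> chF2 g_irr; have [sqrt sqrtK sqrtE] := injF_bij (sqr_inj chF2).
pose r t := sqrt (t ^+ 2 + t + g)^-1.
have r2 t : r t ^+ 2 = (t ^+ 2 + t + g)^-1 := sqrtE _.
have r_neq0 t : r t != 0.
  by apply/eqP => rt0; move: (invr_neq0 (g_irr t)); rewrite -r2 rt0 expr0n eqxx.
pose rho t := (r t, r t * t).
have rho_inj : injective rho by move=> t t' [E1]; rewrite E1 => /mulfI ->.
have -> : [set x : F * F | Qf g x.1 x.2 == 1] = (0, 1) |: (rho @: [set: F]).
  apply/setP => [[b d]]; rewrite !inE /=; apply/eqP/idP => [ | ].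
    move=> Q1; have [b0 | b0] := eqVneq b 0.
      move: Q1; rewrite b0 /Qf expr0n /= mulr0 mul0r !add0r -(expr1n _ 2).
      by move/(sqr_inj chF2) => ->; rewrite expr1n eqxx.
    apply/orP; right; apply/imsetP; exists (d / b) => //.
    have rb : r (d / b) = b.
      rewrite /r -[b in RHS](sqrtK b) /=; congr sqrt.
      by apply: (canLR (@invrK _)); rewrite -[RHS]mul1r -Q1 /Qf; field.
    by rewrite /rho rb mulrC divfK.
  case/orP => [/eqP [-> ->] | /imsetP [t _ [-> ->]]].
    by rewrite /Qf expr0n /= mulr0 mul0r !add0r expr1n.
  have -> : Qf g (r t) (r t * t) = r t ^+ 2 * (t ^+ 2 + t + g) by rewrite /Qf; ring.
  by rewrite r2 mulVf.
rewrite cardsU1 (card_imset _ rho_inj) cardsT.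
suff -> : (0, 1) \notin rho @: [set: F] by [].
by apply/imsetP => [[t _ [E _]]]; move: (r_neq0 t); rewrite -E eqxx.
Qed.

(** * Artin-Schreier over F_q *)

Section ArtinSchreier.
Variables (F : finFieldType) (q : nat) (w : F).
Hypothesis qnat : [pchar F].-nat q.
Hypothesis chF2 : 2%N \in [pchar F].
Hypothesis trw : w + w ^+ q = 1.

Local Notation cj x := (x ^+ q).

Lemma add1w : 1 + w = cj w.
Proof. by rewrite -trw addrAC addrr_pchar2 // add0r. Qed.

Lemma conjw_neq : cj w != w.
Proof. by rewrite -add1w -subr_eq0 addrK oner_neq0. Qed.

(* Counting: x |-> x^2 + x is two-to-one on F_q, and its image A and the
   translate A + (w^2 + w) are disjoint subsets of F_q. *)
Lemma AS_onto_fixed (mu : F) : cj mu = mu -> exists r, r ^+ 2 + r = mu.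
Proof.
move=> mu_fix.
pose R : {set F} := [set x | cj x == x].
pose A : {set F} := [set x ^+ 2 + x | x in R].
pose B : {set F} := [set a + (w ^+ 2 + w) | a in A].
have AS_fix (x : F) : cj (x ^+ 2 + x) = cj x ^+ 2 + cj x.
  by rewrite (conjD qnat) conjX.
have AR : A \subset R.
  by apply/subsetP => a /imsetP [x]; rewrite !inE => /eqP xR ->; rewrite AS_fix xR.
have BR : B \subset R.
  apply/subsetP => b /imsetP [a aA ->]; move/subsetP/(_ a aA): AR.
  rewrite !inE (conjD qnat) AS_fix -add1w => /eqP ->.
  by rewrite AS_add // expr1n addrr_pchar2 // add0r.
have dAB : [disjoint A & B].
  apply/pred0P => z /=; apply/negP => /andP [/imsetP [x xR ->]].
  case/imsetP => a /imsetP [y yR ->]; rewrite -!AS_add //.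
  move/AS_eq => /(_ chF2) E; suff : cj w == w by rewrite (negPf conjw_neq).
  move: xR yR; rewrite !inE => /eqP xR /eqP yR.
  have [-> | ->] : w = (x : F) + y \/ w = (x : F) + 1 + y.
    by case: E => <-; [left | right]; rewrite addrC addrA addrr_pchar2 // add0r.
  - by apply/eqP; apply: (etrans (conjD qnat _ _)); rewrite xR yR.
  - by apply/eqP; apply: (etrans (conjD qnat _ _)); rewrite (conjD qnat) conj1 xR yR.
have cardB : #|B| = #|A| by apply: card_imset; exact: addIr.
have cardR : (#|R| <= 2 * #|A|)%N.
  apply: (leq_card_fiber2 (t := +%R^~ 1)) => x y _ _; exact: AS_eq.
have RAB : A :|: B = R.
  apply/eqP; rewrite eqEcard subUset AR BR /= cardsU (disjoint_setI0 dAB).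
  by rewrite cards0 subn0 cardB addnn -mul2n.
have : mu \in A :|: B by rewrite RAB inE mu_fix.
case/setUP => [/imsetP [x _ ->] | /imsetP [a /imsetP [x _ ->] ->]].
  by exists x.
by exists (x + w); rewrite AS_add.
Qed.

End ArtinSchreier.

Section Coordinates.
Variable F : finFieldType.

Definition col6 (x1 x2 x3 x4 x5 x6 : F) : 'cV[F]_6 :=
  \col_(i < 6) nth 0 [:: x1; x2; x3; x4; x5; x6] i.

Lemma crd_col6 x1 x2 x3 x4 x5 x6 k : (k < 6)%N ->
  crd (col6 x1 x2 x3 x4 x5 x6) k.+1 = nth 0 [:: x1; x2; x3; x4; x5; x6] k.
Proof. by move=> lt_k6; rewrite /crd !mxE inordK. Qed.

Lemma col6_crd (v : 'cV[F]_6) :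
  v = col6 (crd v 1) (crd v 2) (crd v 3) (crd v 4) (crd v 5) (crd v 6).
Proof.
apply/matrixP => i j; rewrite ord1 !mxE /crd.
by case: i => [[|[|[|[|[|[|//]]]]]] lt_i6]; congr (v _ _); apply: val_inj; rewrite /= inordK.
Qed.

Lemma col6_inj x1 x2 x3 x4 x5 x6 y1 y2 y3 y4 y5 y6 :
  col6 x1 x2 x3 x4 x5 x6 = col6 y1 y2 y3 y4 y5 y6 ->
  [/\ x1 = y1, x2 = y2, x3 = y3, x4 = y4 & x5 = y5 /\ x6 = y6].
Proof.
move=> E; have C k : (k < 6)%N ->
    nth 0 [:: x1; x2; x3; x4; x5; x6] k = nth 0 [:: y1; y2; y3; y4; y5; y6] k.
  by move=> lt_k6; rewrite -!crd_col6 // E.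
by split; [exact: (C 0%N) | exact: (C 1%N) | exact: (C 2%N) | exact: (C 3%N)
  | split; [exact: (C 4%N) | exact: (C 5%N)]].
Qed.

Lemma ppt_eq_last1 (u v : 'cV[F]_6) : crd u 6 = 1 -> crd v 6 = 1 ->
  (ppt u == ppt v) = (u == v).
Proof.
move=> u6 v6; apply/eqP/eqP => [E | -> //].
have /andP [/submxP [D uD] _] : (u^T == v^T)%MS by apply/genmxP.
have uDv i : u i 0 = D 0 0 * v i 0.
  by have := congr1 (fun M : 'M[F]_(1, 6) => M 0 i) uD; rewrite !mxE big_ord1 !mxE.
have D1 : D 0 0 = 1 by move: u6; rewrite /crd uDv -/(crd v 6) v6 mulr1.
by apply/matrixP => i j; rewrite ord1 uDv D1 mul1r.
Qed.

Definition col4 (l0 l1 l2 l3 : F) : 'cV[F]_4 :=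
  \col_(i < 4) nth 0 [:: l0; l1; l2; l3] i.

Lemma col4_entries (lam : 'cV[F]_4) :
  lam = col4 (lam 0 0) (lam 1 0) (lam 2 0) (lam 3 0).
Proof.
apply/matrixP => i j; rewrite ord1 !mxE.
by case: i => [[|[|[|[|//]]]] ?]; congr (lam _ _); apply: val_inj.
Qed.

End Coordinates.

(** * The stabilizer and the orbit of S_gamma *)

Section Sigma.
Variables (F : finFieldType) (q : nat) (w g : F).
Hypotheses (qnat : [pchar F].-nat q) (cardF : #|F| = (q ^ 2)%N).
Hypothesis chF2 : 2%N \in [pchar F].
Hypothesis trw : w + w ^+ q = 1.
Hypothesis g_irr : forall x : F, x ^+ 2 + x + g != 0.

Local Notation cj x := (x ^+ q).
Local Notation conjE := (conjE qnat cardF).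
Local Notation S := (Sgamma q w g).

Definition trace (x : F) := x + cj x.

Lemma conj_trace x : cj (trace x) = trace x.
Proof. by rewrite /trace !conjE addrC. Qed.

Lemma traceD x y : trace (x + y) = trace x + trace y.
Proof. by rewrite /trace conjD // addrACA. Qed.

Lemma conjw_sub : cj w = 1 - w.
Proof. by rewrite -trw addrC addKr. Qed.

Lemma add1_conjw : 1 + cj w = w.
Proof. by rewrite -trw -addrA addrr_pchar2 // addr0. Qed.

Lemma w_neq0 : w != 0.
Proof. by apply: contra_eq_neq trw => ->; rewrite conj0 // addr0 eq_sym oner_neq0. Qed.

Lemma conjw_neq0 : cj w != 0.
Proof. by rewrite conj_eq0 // w_neq0. Qed.

Lemma trace_invw : trace w^-1 != 0.
Proof.
have -> : trace w^-1 = (w + cj w) / (w * cj w).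
  by rewrite /trace conjV; field; rewrite w_neq0 conjw_neq0.
by rewrite trw div1r invr_eq0 mulf_neq0 ?w_neq0 ?conjw_neq0.
Qed.

Definition Spoint (n1 n2 e : F) : 'cV[F]_6 :=
  col6 (n1 / w) (cj (n1 / w)) (trace (cj w * g / w) + trace (e / w))
       (cj ((n2 + cj w) / w)) ((n2 + cj w) / w) 1.

Lemma Sgamma_col6 : S = col6 (g / w) (cj g / cj w) (trace (cj w * g / w)) 1 1 1.
Proof.
apply/matrixP => i j; rewrite !mxE.
by case: i => [[|[|[|[|[|[|//]]]]]] ?] //=; rewrite /trace !conjE.
Qed.

Lemma Sgamma_Spoint : S = Spoint g 1 0.
Proof.
rewrite Sgamma_col6 /Spoint mul0r /trace !conjE !addr0.
by rewrite (add1w chF2 trw) add1_conjw !divff ?conjw_neq0 ?w_neq0.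
Qed.

Lemma Mabcd_col6 a b c d y1 y2 y3 y4 y5 y6 :
  Mabcd q w a b c d *m col6 y1 y2 y3 y4 y5 y6 =
  col6 (a ^+ 2 * y1 + c ^+ 2 * y5 + c * (a + c * cj w) / w * y6)
       (cj a ^+ 2 * y2 + cj c ^+ 2 * y4 + cj c * (cj a + cj c * w) / cj w * y6)
       (a * b * y1 + cj a * cj b * y2 + y3 + cj c * cj d * y4 + c * d * y5
        + (d * (a + c * cj w) / w + cj d * (cj a + cj c * w) / cj w
           + 1 / (w ^+ q.+1)) * y6)
       (cj b ^+ 2 * y2 + cj d ^+ 2 * y4 + (cj d * (cj b + cj d * w) + w) / cj w * y6)
       (b ^+ 2 * y1 + d ^+ 2 * y5 + (d * (b + d * cj w) + cj w) / w * y6)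
       y6.
Proof.
apply/matrixP => i j; rewrite !mxE !big_ord_recl big_ord0 /= !mxE /=.
by case: i => [[|[|[|[|[|[|//]]]]]] ?] /=; ring.
Qed.

Lemma Mabcd_Sgamma a b c d : a * d + b * c = 1 ->
  Mabcd q w a b c d *m S = Spoint (Qf g a c) (Qf g b d) (Qcross g a b c d).
Proof.
move=> det1; have w0 := w_neq0; have w'0 : 1 - w != 0 by rewrite -conjw_sub conjw_neq0.
have bc : b * c = a * d + 1.
  by rewrite -det1 addrA addrr_pchar2 // add0r.
rewrite Sgamma_col6 Mabcd_col6 /Spoint /Qf /Qcross /trace.
rewrite [w ^+ q.+1]exprS; congr col6; rewrite ?bc ?conjE ?conjw_sub; field.
all: by rewrite ?w0 ?w'0.
Qed.

Lemma Spoint_inj n1 n2 e n1' n2' e' :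
  Spoint n1 n2 e = Spoint n1' n2' e' ->
  [/\ n1 = n1', n2 = n2' & trace (e / w) = trace (e' / w)].
Proof.
case/col6_inj => E1 _ /addrI E3 _ [E5 _]; split=> //.
  by rewrite -(divfK w_neq0 n1) E1 divfK ?w_neq0.
by apply/(addIr (cj w)); rewrite -(divfK w_neq0 (n2 + _)) E5 divfK ?w_neq0.
Qed.

Lemma ppt_Spoint_eq n1 n2 e n1' n2' e' :
  ppt (Spoint n1 n2 e) = ppt (Spoint n1' n2' e') ->
  [/\ n1 = n1', n2 = n2' & trace (e / w) = trace (e' / w)].
Proof. by move/eqP; rewrite ppt_eq_last1 ?crd_col6 // => /eqP /Spoint_inj. Qed.

Lemma Gset_memP (m : 'M[F]_6) :
  reflect (exists a b c d, a * d + b * c = 1 /\ m = Mabcd q w a b c d)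
          (m \in Gset q w).
Proof.
rewrite inE; apply: (iffP existsP) => [[a] | [a [b [c [d [det1 ->]]]]]].
  case/existsP => b /existsP [c /existsP [d /andP [/eqP det1 /eqP ->]]].
  by exists a, b, c, d.
exists a; apply/existsP; exists b; apply/existsP; exists c; apply/existsP; exists d.
by rewrite det1 !eqxx.
Qed.

Lemma Mabcd_inj_bd a b c d a' b' c' d' :
  Mabcd q w a b c d = Mabcd q w a' b' c' d' -> b = b' /\ d = d'.
Proof.
move=> E; have M40 := congr1 (fun M : 'M[F]_6 => M (inord 4) (inord 0)) E.
have M44 := congr1 (fun M : 'M[F]_6 => M (inord 4) (inord 4)) E.
by move: M40 M44; rewrite /= !mxE !inordK // => /(sqr_inj chF2) -> /(sqr_inj chF2) ->.
Qed.

Definition stab_param (x : F * F) := Mabcd q w (x.1 + x.2) x.1 (x.1 * g) x.2.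

Lemma stab_param_det1 b d : Qf g b d = 1 -> (b + d) * d + b * (b * g) = 1.
Proof. by move=> <-; rewrite /Qf; ring. Qed.

Lemma stab_param_inj : injective stab_param.
Proof. by move=> [b d] [b' d'] /Mabcd_inj_bd /= [-> ->]. Qed.

(* By Cramer's rule, since the determinant of the system in (a, c) is Qf g b d. *)
Lemma stab_solve a b c d : a * d + b * c = 1 -> Qf g b d = 1 ->
  Qcross g a b c d = 0 -> a = b + d /\ c = b * g.
Proof.
move=> det1 Q1 e0; split.
  have : a * Qf g b d = (b + d) * (a * d + b * c) + b * Qcross g a b c d.
    by apply: (eqr_pchar2 chF2 (z := - (b * b * c + b * c * d))); rewrite /Qf /Qcross; ring.
  by rewrite Q1 det1 e0 !mulr1 mulr0 addr0.
have : c * Qf g b d = b * g * (a * d + b * c) + d * Qcross g a b c d.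
  by apply: (eqr_pchar2 chF2 (z := - (a * b * d * g))); rewrite /Qf /Qcross; ring.
by rewrite Q1 det1 e0 !mulr1 mulr0 addr0.
Qed.

Lemma stabilizer_Sgamma :
  [set m in Gset q w | ppt (m *m S) == ppt S]
  = stab_param @: [set x : F * F | Qf g x.1 x.2 == 1].
Proof.
apply/setP => m; apply/idP/imsetP => [ | [[b d]]].
  case/setIdP => /Gset_memP [a [b [c [d [det1 ->]]]]].
  rewrite Mabcd_Sgamma // Sgamma_Spoint => /eqP /ppt_Spoint_eq [Q1 Q2 T].
  have e0 : Qcross g a b c d = 0.
    have : Qcross g a b c d ^+ 2 + Qcross g a b c d = 0.
      by apply: (addIr g); rewrite -Qf_mul // Q1 Q2 mulr1 add0r.
    case/(AS_eq0 chF2) => [// | e1]; move: T; rewrite e1 mul0r div1r /trace conj0 // addr0.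
    by move/eqP; rewrite (negPf trace_invw).
  have [-> ->] := stab_solve det1 Q2 e0.
  by exists (b, d); rewrite ?inE /= ?Q2.
rewrite inE /= => /eqP Q1 ->; apply/setIdP; split.
  by apply/Gset_memP; exists (b + d), b, (b * g), d; rewrite stab_param_det1.
rewrite Mabcd_Sgamma ?stab_param_det1 // Sgamma_Spoint; apply/eqP; congr (ppt (Spoint _ _ _)).
- rewrite -[RHS]mulr1 -Q1; apply: (eqr_pchar2 chF2 (z := g * (b ^+ 2 + b * d))).
  by rewrite /Qf /=; ring.
- by [].
- by apply: (eqr_pchar2 chF2 (z := b * b * g + b * d * g)); rewrite /Qcross /=; ring.
Qed.

Lemma card_stabilizer_Sgamma :
  #|[set m in Gset q w | ppt (m *m S) == ppt S]| = (q ^ 2 + 1)%N.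
Proof.
by rewrite stabilizer_Sgamma (card_imset _ stab_param_inj) card_Qf_eq1 // cardF addn1.
Qed.

Definition orbit_param (x : F * F) :=
  ppt (Mabcd q w x.1^-1 0 (x.2 / x.1) x.1 *m S).

Lemma orbit_param_Spoint s e : s != 0 ->
  orbit_param (s, e) = ppt (Spoint ((e ^+ 2 + e + g) / s ^+ 2) (s ^+ 2) e).
Proof.
move=> s0; rewrite /orbit_param Mabcd_Sgamma /=; last by rewrite mul0r addr0 mulVf.
by congr (ppt (Spoint _ _ _)); rewrite /Qf /Qcross; [field | ring | field].
Qed.

Lemma orbit_Sgamma :
  [set ppt (m *m S) | m in Gset q w] = orbit_param @: [set x : F * F | x.1 != 0].
Proof.
have [sqrt _ sqrtE] := injF_bij (sqr_inj chF2).
apply/setP => p; apply/imsetP/imsetP => [[m /Gset_memP [a [b [c [d [det1 ->]]]]] ->] | ].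
  have bd : (b != 0) || (d != 0).
    apply: contraT; rewrite negb_or !negbK => /andP [/eqP b0 /eqP d0].
    by move: det1; rewrite b0 d0 mulr0 mul0r addr0 => /eqP; rewrite eq_sym oner_eq0.
  pose s := sqrt (Qf g b d); have s2 : s ^+ 2 = Qf g b d := sqrtE _.
  have s0 : s != 0.
    by apply: contra_neq (Qf_neq0 g_irr bd) => s0; rewrite -s2 s0 expr0n.
  exists (s, Qcross g a b c d); first by rewrite inE.
  rewrite orbit_param_Spoint // Mabcd_Sgamma // s2; congr (ppt (Spoint _ _ _)).
  by rewrite -Qf_mul // mulfK ?Qf_neq0.
case=> [[s e]]; rewrite inE /= => s0 ->.
exists (Mabcd q w s^-1 0 (e / s) s) => //.
by apply/Gset_memP; exists s^-1, 0, (e / s), s; rewrite mul0r addr0 mulVf.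
Qed.

Lemma orbit_param_inj : {in [set x : F * F | x.1 != 0] &, injective orbit_param}.
Proof.
move=> [s e] [s' e']; rewrite !inE /= => s0 s'0.
rewrite !orbit_param_Spoint // => /ppt_Spoint_eq [E1 /(sqr_inj chF2) ss' T].
rewrite -{}ss' in E1 *; congr pair.
have : e ^+ 2 + e = e' ^+ 2 + e'.
  have s20 : s ^+ 2 != 0 by rewrite expf_neq0.
  by apply: (addIr g); rewrite -(divfK s20 (_ + g)) E1 divfK.
case/(AS_eq chF2) => [// | ee']; move: T.
rewrite ee' mulrDl traceD -{1}[trace (e / w)]addr0 => /addrI /esym /eqP.
by rewrite div1r (negPf trace_invw).
Qed.

Lemma card_orbit_Sgamma :
  #|[set ppt (m *m S) | m in Gset q w]| = (q ^ 2 * (q ^ 2 - 1))%N.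
Proof.
rewrite orbit_Sgamma (card_in_imset orbit_param_inj).
have -> : [set x : F * F | x.1 != 0] = setX [set~ 0] setT.
  by apply/setP => [[s e]]; rewrite !inE andbT.
by rewrite cardsX cardsC1 cardsT cardF mulnC subn1.
Qed.

(** * The solid Pi /\ S_gamma^perp *)

Lemma hform_scaler (X Y : 'cV[F]_6) k : hform q w X (k *: Y) = cj k * hform q w X Y.
Proof. by rewrite /hform /crd !mxE !conjM; ring. Qed.

Lemma hform_Sgamma_Pi a d b :
  hform q w S (col6 a (cj a) d b (cj b) 0) = cj d + trace a + trace (g * cj b).
Proof.
rewrite Sgamma_col6 /hform !crd_col6 //= /trace !conjE conjw_sub.
by field; rewrite w_neq0 -conjw_sub conjw_neq0.
Qed.

Lemma Fq_coords (x : F) : exists u v, [/\ cj u = u, cj v = v & x = w * v + u].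
Proof.
exists (x + trace x * w), (trace x); split; last 2 first.
- exact: conj_trace.
- by apply: (eqr_pchar2 chF2 (z := - (w * trace x))); ring.
rewrite conjD // conjM conj_trace -(add1w chF2 trw) /trace.
by apply: (eqr_pchar2 chF2 (z := cj x)); ring.
Qed.

Definition cc := trace (g * cj w).

(* The columns are the points (alpha, beta, delta0) = (1, 0, 0),
   (cc^2, w, cc), (w, 0, 1), (0, 1, trace g) of Pi /\ S^perp; the entry cc^2
   removes the lam_1^2 term of the quadric. *)
Definition Umat : 'M[F]_(6, 4) :=
  \matrix_(i < 6, j < 4) nth 0 (nth [::] [:: [:: 1; cc ^+ 2; w; 0];
                                            [:: 1; cc ^+ 2; cj w; 0];
                                            [:: 0; cc; 1; trace g];
                                            [:: 0; w; 0; 1];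
                                            [:: 0; cj w; 0; 1];
                                            [:: 0; 0; 0; 0]] i) j.

Lemma Umat_col4 l0 l1 l2 l3 :
  Umat *m col4 l0 l1 l2 l3 =
  col6 (l0 + cc ^+ 2 * l1 + w * l2) (l0 + cc ^+ 2 * l1 + cj w * l2)
       (cc * l1 + l2 + trace g * l3) (w * l1 + l3) (cj w * l1 + l3) 0.
Proof.
apply/matrixP => i j; rewrite !mxE !big_ord_recl big_ord0 /= !mxE /=.
by case: i => [[|[|[|[|[|[|//]]]]]] ?] /=; ring.
Qed.

Lemma Umat_inj (lam : 'cV[F]_4) : Umat *m lam = 0 -> lam = 0.
Proof.
rewrite [lam]col4_entries Umat_col4.
set l0 := lam 0 0; set l1 := lam 1 0; set l2 := lam 2 0; set l3 := lam 3 0.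
have -> : 0 = col6 0 0 0 0 0 0 :> 'cV[F]_6.
  by apply/matrixP => i j; rewrite !mxE; case: i => [[|[|[|[|[|[|//]]]]]] ?].
case/col6_inj => E1 E2 _ E4 [E5 _].
have l1_0 : l1 = 0.
  have : (w - cj w) * l1 = (w * l1 + l3) - (cj w * l1 + l3) by ring.
  by rewrite E4 E5 subrr (oppr_pchar2 chF2) trw mul1r.
have l2_0 : l2 = 0.
  have : (w - cj w) * l2
         = (l0 + cc ^+ 2 * l1 + w * l2) - (l0 + cc ^+ 2 * l1 + cj w * l2) by ring.
  by rewrite E1 E2 subrr (oppr_pchar2 chF2) trw mul1r.
have l3_0 : l3 = 0 by rewrite -E4 l1_0 mulr0 add0r.
have l0_0 : l0 = 0 by rewrite -E1 l1_0 l2_0 !mulr0 !addr0.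
by apply/matrixP => i j; rewrite ord1 !mxE; case: i => [[|[|[|[|//]]]] ?].
Qed.

Lemma FqVecP (lam : 'cV[F]_4) : FqVec q lam -> forall i, cj (lam i 0) = lam i 0.
Proof. by move/forallP => lamF i; apply/eqP/lamF. Qed.

Lemma FqVec_col4 (l0 l1 l2 l3 : F) :
  cj l0 = l0 -> cj l1 = l1 -> cj l2 = l2 -> cj l3 = l3 -> FqVec q (col4 l0 l1 l2 l3).
Proof.
move=> ? ? ? ?; apply/forallP => i; rewrite /inFq !mxE.
by case: i => [[|[|[|[|//]]]] ?]; apply/eqP.
Qed.

Lemma Pi_perp_Umat (a b d : F) :
  cj d = d -> cj d + trace a + trace (g * cj b) = 0 ->
  exists2 lam, FqVec q lam & col6 a (cj a) d b (cj b) 0 = Umat *m lam.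
Proof.
move=> dF perp.
have [l3 [l1 [l3F l1F Eb]]] := Fq_coords b.
have [l0 [l2 [l0F l2F Ea']]] := Fq_coords (a + cc ^+ 2 * l1).
have Ea : a = l0 + cc ^+ 2 * l1 + w * l2.
  by rewrite -(addrK (cc ^+ 2 * l1) a) Ea' (oppr_pchar2 chF2); ring.
have Ed : d = cc * l1 + l2 + trace g * l3.
  have -> : d = trace a + trace (g * cj b).
    rewrite -[RHS]add0r -perp dF.
    by apply: (eqr_pchar2 chF2 (z := - (trace a + trace (g * cj b)))); ring.
  rewrite -[l2 in RHS]mul1r -trw Ea Eb /cc /trace !conjE l0F l1F l2F l3F.
  by apply: (eqr_pchar2 chF2 (z := l0 + cc ^+ 2 * l1)); rewrite /cc /trace !conjE; ring.
exists (col4 l0 l1 l2 l3); first exact: FqVec_col4.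
rewrite Umat_col4 {1}Ea {1}Eb Ed; congr col6.
  by rewrite Ea !conjE l0F l1F l2F /cc /trace !conjE; ring.
by rewrite Eb !conjE l1F l3F.
Qed.

Section UmatPoint.
Variables (l0 l1 l2 l3 : F).
Hypotheses (l0F : cj l0 = l0) (l1F : cj l1 = l1) (l2F : cj l2 = l2) (l3F : cj l3 = l3).

Let a := l0 + cc ^+ 2 * l1 + w * l2.
Let b := w * l1 + l3.
Let d := cc * l1 + l2 + trace g * l3.

Lemma Umat_col4_fixed : Umat *m col4 l0 l1 l2 l3 = col6 a (cj a) d b (cj b) 0.
Proof.
rewrite Umat_col4; congr col6; rewrite /a /b !conjE ?l0F ?l1F ?l2F ?l3F //.
by rewrite /cc /trace !conjE; ring.
Qed.

Lemma conj_Umat_d : cj d = d.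
Proof. by rewrite /d /cc /trace !conjE l1F l2F l3F; ring. Qed.

Lemma Umat_perp : cj d + trace a + trace (g * cj b) = 0.
Proof.
rewrite conj_Umat_d.
apply: (eqr_pchar2 chF2 (z := l0 + cc ^+ 2 * l1 + cc * l1 + l2 + trace g * l3)).
by rewrite /a /b /d /cc /trace !conjE l0F l1F l2F l3F conjw_sub; ring.
Qed.

Lemma Umat_quadric :
  d ^+ 2 + a * cj b + cj a * b
  = l0 * l1 + 1 * l2 ^+ 2 + 1 * l2 * l3 + trace g ^+ 2 * l3 ^+ 2.
Proof.
apply: (eqr_pchar2 chF2 (z := cc ^+ 2 * l1 ^+ 2 + cc * l1 * l2 + cc * trace g * l1 * l3
  + trace g * l2 * l3 + l0 * l3 + cc ^+ 2 * l1 * l3 + w * cj w * l1 * l2)).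
by rewrite /a /b /d /cc /trace !conjE l0F l1F l2F l3F conjw_sub; ring.
Qed.

End UmatPoint.

(* A zero (x/y) in F_q of X^2 + X + (trace g)^2 would give, through an
   Artin-Schreier root in F_{q^2}, a root of X^2 + X + g. *)
Lemma trace_g_aniso (x y : F) : cj x = x -> cj y = y -> (x != 0) || (y != 0) ->
  1 * x ^+ 2 + 1 * x * y + trace g ^+ 2 * y ^+ 2 != 0.
Proof.
move=> xF yF; have [-> | y0 _] := eqVneq y 0.
  by rewrite orbF => x0; rewrite expr0n /= !mulr0 !addr0 mul1r expf_neq0.
pose s := x / y; have sF : cj s = s by rewrite /s !conjE xF yF.
have -> : 1 * x ^+ 2 + 1 * x * y + trace g ^+ 2 * y ^+ 2
          = y ^+ 2 * (s ^+ 2 + s + trace g ^+ 2) by rewrite /s; field.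
rewrite mulf_eq0 negb_or expf_neq0 //=; apply/eqP => s_root.
have [u uF u_AS] : exists2 u : F, cj u = u & u ^+ 2 + u = trace g.
  exists (s + trace g); first by rewrite conjD // sF conj_trace.
  rewrite -[RHS]add0r -s_root.
  by apply: (eqr_pchar2 chF2 (z := s * trace g)); ring.
have [r0 r0_AS] : exists r0 : F, r0 ^+ 2 + r0 = g + u ^+ 2 * w ^+ 2 + u * w.
  apply: (AS_onto_fixed qnat chF2 trw).
  have cjg : cj g = trace g - g by rewrite /trace addrC addKr.
  rewrite !conjE uF -(add1w chF2 trw) cjg -u_AS.
  by apply: (eqr_pchar2 chF2 (z := u ^+ 2 + u - g + u ^+ 2 * w)); ring.
have : (r0 + u * w) ^+ 2 + (r0 + u * w) + g = 0.
  have -> : (r0 + u * w) ^+ 2 + (r0 + u * w) + g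
            = (r0 ^+ 2 + r0 - (g + u ^+ 2 * w ^+ 2 + u * w))
              + 2%:R * (r0 * u * w + u ^+ 2 * w ^+ 2 + u * w + g) by ring.
  by rewrite r0_AS subrr (two_eq0 chF2) mul0r addr0.
by move/eqP; rewrite (negPf (g_irr _)).
Qed.

Lemma Umat_col4E (lam : 'cV[F]_4) :
  Umat *m lam = Umat *m col4 (lam 0 0) (lam 1 0) (lam 2 0) (lam 3 0).
Proof. by rewrite -col4_entries. Qed.

Lemma Umat_Pi_perp (lam : 'cV[F]_4) : FqVec q lam ->
  [/\ inV q (Umat *m lam), crd (Umat *m lam) 6 = 0 & hform q w S (Umat *m lam) = 0].
Proof.
move/FqVecP => lamF; rewrite Umat_col4E Umat_col4_fixed ?lamF //.
rewrite hform_Sgamma_Pi Umat_perp ?lamF // /inV /inFq !crd_col6 //=.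
by rewrite conj_Umat_d ?lamF // conj0 // !eqxx.
Qed.

Lemma Umat_quadric_form (lam : 'cV[F]_4) : FqVec q lam ->
  let v := Umat *m lam in
  crd v 3 ^+ 2 + crd v 1 * crd v 5 + crd v 2 * crd v 4
  = lam 0 0 * lam 1 0 + 1 * lam 2 0 ^+ 2 + 1 * lam 2 0 * lam 3 0
    + trace g ^+ 2 * lam 3 0 ^+ 2.
Proof.
move/FqVecP => lamF /=; rewrite Umat_col4E Umat_col4_fixed ?lamF // !crd_col6 //=.
by rewrite -Umat_quadric ?lamF // [cj _ * _]mulrC.
Qed.

Lemma inV_Pi_perp_Umat (u : 'cV[F]_6) :
  inV q u -> crd u 6 = 0 -> hform q w S u = 0 ->
  exists2 lam, FqVec q lam & u = Umat *m lam.
Proof.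
case/and4P => /eqP u2 /eqP u5 /eqP u3 _ u6 perp.
have uE : u = col6 (crd u 1) (cj (crd u 1)) (crd u 3) (crd u 4) (cj (crd u 4)) 0.
  by rewrite {1}[u]col6_crd u2 u5 u6.
by rewrite {1}uE; apply: Pi_perp_Umat => //; rewrite -hform_Sgamma_Pi -uE.
Qed.

Lemma Umat_scale_Pi_perp (lam : 'cV[F]_4) k : FqVec q lam -> lam != 0 -> k != 0 ->
  inPi q (k *: (Umat *m lam)) /\ inPerp q w S (k *: (Umat *m lam)).
Proof.
move=> lamF lam0 k0; have [UV U6 Uperp] := Umat_Pi_perp lamF.
have sigma : inSigma q (k *: (Umat *m lam)).
  split; first by rewrite scaler_eq0 negb_or k0; apply: contraNneq lam0 => /Umat_inj ->.
  by exists k^-1; rewrite invr_eq0 k0 scalerA mulVf // scale1r.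
split; split=> //; last by rewrite hform_scaler Uperp mulr0.
by rewrite /crd mxE -/(crd _ 6) U6 mulr0.
Qed.

Lemma solid_Pi_perp :
  is_solid_of_Sigma q (fun v => inPi q v /\ inPerp q w S v) Umat.
Proof.
split.
  split=> [j | lam _ /Umat_inj //]; rewrite colE.
  have [] // := Umat_Pi_perp (lam := delta_mx j 0).
  by apply/forallP => i; rewrite /inFq !mxE; case: (_ && _); rewrite ?conj0 ?conj1.
move=> v; split => [[[[v0 [k [k0 Vkv]]] v6] [_ perp]] | [lam [lamF lam0 [k [k0 ->]]]]].
  have [lam lamF kvE] : exists2 lam, FqVec q lam & k *: v = Umat *m lam.
    apply: inV_Pi_perp_Umat => //; first by rewrite /crd mxE -/(crd v 6) v6 mulr0.
    by rewrite hform_scaler perp mulr0.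
  exists lam; split => //.
    by apply: contraNneq v0 => lam0; apply/eqP/(scalerI k0); rewrite kvE lam0 mulmx0 scaler0.
  by exists k^-1; rewrite invr_eq0 k0 -kvE scalerA mulVf // scale1r.
exact: Umat_scale_Pi_perp.
Qed.

Lemma elliptic_Pi_perp :
  is_elliptic_quadric_in q Umat (fun v => inQ q v /\ inPerp q w S v).
Proof.
exists 1, 1, (trace g ^+ 2); split; rewrite /inFq.
- by rewrite conj1.
- by rewrite conj1.
- by rewrite conjX conj_trace.
- by move=> x y /eqP xF /eqP yF; apply: trace_g_aniso.
move=> lam lamF lam0; have := Umat_scale_Pi_perp lamF lam0 (oner_neq0 F).
rewrite scale1r /inQ -(Umat_quadric_form lamF) => -[UPi Uperp].
by split => [[[_ ->]] | Q0].
Qed.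

End Sigma.

Unset Implicit Arguments.

Theorem mainTheorem11 (h : nat) (q : nat) (F : finFieldType) (w gam : F) :
  (0 < h)%N -> q = (2 ^ h)%N -> #|F| = (q ^ 2)%N ->
  ~~ inFq q w -> w + w ^+ q = 1 ->
  (forall x : F, x ^+ 2 + x + gam != 0) ->
  let S := Sgamma q w gam in
  (exists U : 'M[F]_(6,4),
     is_solid_of_Sigma q (fun v => inPi q v /\ inPerp q w S v) U /\
     is_elliptic_quadric_in q U
       (fun v => inQ q v /\ inPerp q w S v)) /\
  #|[set g in Gset q w | ppt (g *m S) == ppt S]| = (q ^ 2 + 1)%N /\
  #|[set ppt (g *m S) | g in Gset q w]| = (q ^ 2 * (q ^ 2 - 1))%N.
Proof.
move=> h_gt0 qE cardF _ trw g_irr S.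
have chF2 : 2%N \in [pchar F].
  by apply: (@card_finPcharP _ 2 (h * 2)) => //; rewrite cardF qE -expnM.
have qnat : [pchar F].-nat q by rewrite qE pnatX (pnatE _ (isT : prime 2)) chF2.
split; last by split; [exact: (card_stabilizer_Sgamma qnat cardF chF2 trw g_irr)
                      | exact: (card_orbit_Sgamma qnat cardF chF2 trw g_irr)].
exists (Umat q w gam); split.
  exact: (solid_Pi_perp gam qnat cardF chF2 trw).
exact: (elliptic_Pi_perp qnat cardF chF2 trw g_irr).
Qed.
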